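(* Let $A\in\{0,1\}$ be a binary treatment (the ''natural treatment value''), $L$ a covariate with values in $\mathcal{L}$, $Y$ an outcome, and $Y^a$, $a\in\{0,1\}$, the potential outcomes, with consistency ($Y^a=Y$ when $A=a$) and positivity ($0<P(A=1\mid L=l)<1$). Fix $l\in\mathcal{L}$ and suppose bounds $\mathbf{L}_a(l)\le\mathbb{E}(Y^a\mid L=l)\le\mathbf{U}_a(l)$ are given for $a\in\{0,1\}$. For $a'\in\{0,1\}$ and $a=1-a'$, define the induced bounds on $\mathbb{E}(Y^a\mid A=a',L=l)$, $$\ell_a(a',l):=\frac{\mathbf{L}_a(l)-\mathbb{E}(Y\mid A=a,L=l)P(A=a\mid L=l)}{P(A=a'\mid L=l)},\qquad u_a(a',l):=\frac{\mathbf{U}_a(l)-\mathbb{E}(Y\mid A=a,L=l)P(A=a\mid L=l)}{P(A=a'\mid L=l)},$$ while for the factual arm $a=a'$ set $\ell_{a'}(a',l)=u_{a'}(a',l):=\mathbb{E}(Y\mid A=a',L=l)$. Define the induced lower bound on the conditional effect $\mathbb{E}(Y^1-Y^0\mid A=a',L=l)$ by $\mathbf{L}(l,a'):=\ell_1(a',l)-u_0(a',l)$; explicitly $$\mathbf{L}(l,1)=\frac{\mathbb{E}(Y\mid L=l)-\mathbf{U}_0(l)}{P(A=1\mid L=l)},\qquad \mathbf{L}(l,0)=\frac{\mathbf{L}_1(l)-\mathbb{E}(Y\mid L=l)}{P(A=0\mid L=l)}.$$ Given $A=a'$ and $L=l$, the healthcare decision criterion with baseline $a=0$ assigns treatment $I(\mathbf{L}(l,a')>0)$;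 the optimist (maximax) criterion assigns treatment $1$ iff $u_1(a',l)>u_0(a',l)$; the pessimist (maximin) criterion assigns treatment $1$ iff $\ell_1(a',l)>\ell_0(a',l)$. Then, when $A=1$, the healthcare decision criterion coincides with the optimist criterion, and when $A=0$ it coincides with the pessimist criterion.
   Context: All criteria are defined pointwise for individuals with natural treatment value $A=a'$ and covariates $L=l$; $I(\cdot)$ denotes the indicator function. *)

(* Pointwise (fixed l) formalization: all conditional
   quantities at L = l are real numbers in an arbitrary real field R.
   Treatment values {0,1} are encoded as bool (true = 1, false = 0). *)
From mathcomp Require Import all_boot all_order all_algebra.
Set Implicit Arguments. Unset Strict Implicit. Unset Printing Implicit Defensive.
Import Order.TTheory GRing.Theory Num.Theory.
Local Open Scope ring_scope.

Section Criteria.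
Variable R : realFieldType.
(* p1 = P(A=1 | L=l) *)
Variable p1 : R.
(* mu a = E(Y | A=a, L=l) *)
Variable mu : bool -> R.
(* Lb a = L_a(l), Ub a = U_a(l): given bounds on E(Y^a | L=l) *)
Variables Lb Ub : bool -> R.

Definition pA (a : bool) : R := if a then p1 else 1 - p1.

(* E(Y | L = l) by the law of total expectation *)
Definition EY : R := mu true * pA true + mu false * pA false.

(* induced bounds ell_a(a',l), u_a(a',l) on E(Y^a | A=a', L=l) *)
Definition ell (a a' : bool) : R :=
  if a == a' then mu a' else (Lb a - mu a * pA a) / pA a'.
Definition upp (a a' : bool) : R :=
  if a == a' then mu a' else (Ub a - mu a * pA a) / pA a'.

Definition Lcate (a' : bool) : R := ell true a' - upp false a'.

Definition healthcare_crit (a' : bool) : bool := 0 < Lcate a'.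
Definition optimist_crit (a' : bool) : bool := upp false a' < upp true a'.
Definition pessimist_crit (a' : bool) : bool := ell false a' < ell true a'.
End Criteria.

From mathcomp Require Import all_boot all_order all_algebra.
Import Order.TTheory GRing.Theory Num.Theory.
Local Open Scope ring_scope.

(* On the factual arm the induced lower and upper bounds coincide, so the
   healthcare criterion, which compares ell_1 with u_0, compares the same
   quantities as the optimist criterion when A = 1 and as the pessimist
   criterion when A = 0. *)

Section Criteria.
Variables (R : realFieldType) (p1 : R) (mu Lb Ub : bool -> R).

Lemma ell_factual (a : bool) : ell p1 mu Lb a a = mu a.
Proof. by rewrite /ell eqxx. Qed.

Lemma upp_factual (a : bool) : upp p1 mu Ub a a = mu a.
Proof. by rewrite /upp eqxx. Qed.

Lemma healthcare_critE (a' : bool) :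
  healthcare_crit p1 mu Lb Ub a' = (upp p1 mu Ub false a' < ell p1 mu Lb true a').
Proof. by rewrite /healthcare_crit /Lcate subr_gt0. Qed.

Lemma healthcare_crit_treated :
  healthcare_crit p1 mu Lb Ub true = optimist_crit p1 mu Ub true.
Proof. by rewrite healthcare_critE ell_factual /optimist_crit upp_factual. Qed.

Lemma healthcare_crit_untreated :
  healthcare_crit p1 mu Lb Ub false = pessimist_crit p1 mu Lb false.
Proof. by rewrite healthcare_critE upp_factual /pessimist_crit ell_factual. Qed.

End Criteria.

Theorem propositionE1 (R : realFieldType) (p1 : R) (mu Lb Ub theta : bool -> R)
  (Hpos : 0 < p1 < 1)
  (Hbounds : forall a : bool, Lb a <= theta a <= Ub a) :
  healthcare_crit p1 mu Lb Ub true = optimist_crit p1 mu Ub true /\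
  healthcare_crit p1 mu Lb Ub false = pessimist_crit p1 mu Lb false.
Proof.
by split; [exact: healthcare_crit_treated | exact: healthcare_crit_untreated].
Qed.
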